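(* Let $\mathcal{C}$ be a full abstract family of languages that is closed under reversal. Let $N$ and $Q$ be finitely generated groups, each admitting a $\mathcal{C}$-left-order. Then the (restricted, standard) wreath product $N\wr Q=\left(\bigoplus_{q\in Q}N\right)\rtimes Q$ admits a $\mathcal{C}$-left-order. In particular, the class of finitely generated groups admitting a left-order whose positive cone is the image of a regular language is closed under wreath products.
   Context: A full abstract family of languages is a class of formal languages closed under monoid homomorphisms, inverse monoid homomorphisms, intersection with regular languages, unions, concatenation and Kleene closure. The reversal of $\mathcal{L}\subseteq X^*$ is $\{x_n\cdots x_1 : x_1\cdots x_n\in\mathcal{L}\}$. A left-order on a group $H$ is a total order invariant under left multiplication; its positive cone is $P=\{h: 1\prec h\}$. For a finitely generated group $H$ and class $\mathcal{C}$, a left-order is a $\mathcal{C}$-left-order if there exist a finite set $X$, a surjective monoid homomorphism $\pi\colon X^*\to H$ and a language $\mathcal{L}\subseteq X^*$ in $\mathcal{C}$ with $\pi(\mathcal{L})$ equal to the positive cone. In $N\wr Q$, $Q$ acts on $\bigoplus_{q\in Q}N$ by shifting indices: $q'(n_q)_{q}q'^{-1}=(n_{q'q})_q$. *)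

From mathcomp Require Import all_boot.
From Stdlib Require List.
From Stdlib Require Import FunctionalExtensionality ProofIrrelevance.

Set Implicit Arguments.
Unset Strict Implicit.
Unset Printing Implicit Defensive.

Record group : Type := Group {
  gcar :> Type;
  gmul : gcar -> gcar -> gcar;
  gone : gcar;
  ginv : gcar -> gcar;
  gmulA : forall x y z, gmul x (gmul y z) = gmul (gmul x y) z;
  gmul1l : forall x, gmul gone x = x;
  gmul1r : forall x, gmul x gone = x;
  gmulVl : forall x, gmul (ginv x) x = gone;
  gmulVr : forall x, gmul x (ginv x) = gone }.

Arguments gone {_}.

Section GroupFacts.
Variable G : group.

Lemma ginv_uniq (x y : G) : gmul x y = gone -> y = ginv x.
Proof.
move=> h; rewrite -(gmul1l y) -(gmulVl x) -gmulA h gmul1r //.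
Qed.

Lemma ginv1 : ginv (@gone G) = gone.
Proof. by symmetry; apply: ginv_uniq; rewrite gmul1l. Qed.

Lemma ginvK (x : G) : ginv (ginv x) = x.
Proof. by symmetry; apply: ginv_uniq; rewrite gmulVl. Qed.

Lemma ginvM (x y : G) : ginv (gmul x y) = gmul (ginv y) (ginv x).
Proof.
symmetry; apply: ginv_uniq.
by rewrite -gmulA (gmulA y) gmulVr gmul1l gmulVr.
Qed.

Lemma gmulKV (a x : G) : gmul a (gmul (ginv a) x) = x.
Proof. by rewrite gmulA gmulVr gmul1l. Qed.

Lemma gmulVK (a x : G) : gmul (ginv a) (gmul a x) = x.
Proof. by rewrite gmulA gmulVl gmul1l. Qed.
End GroupFacts.

(* Evaluation of a word [w] over the alphabet [X] in [H], along the map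
   [g : X -> H]: this is the monoid homomorphism [X^* -> H] extending [g]
   (every monoid homomorphism from the free monoid [X^*] is of this form). *)
Definition eval_word (X : Type) (H : group) (g : X -> H) (w : seq X) : H :=
  foldr (fun x acc => gmul (g x) acc) gone w.

(* [H] is finitely generated (as a group): some finite family generates [H]
   as a group, i.e. every element is a product of generators and their
   inverses (the boolean marks an inverted letter). *)
Definition finitely_generated (H : group) : Prop :=
  exists (X : finType) (g : X -> H),
    forall h : H, exists w : seq (X * bool),
      h = eval_word (fun xb : X * bool => if xb.2 then ginv (g xb.1) else g xb.1) w.

Definition left_order (H : group) (lt : H -> H -> Prop) : Prop :=
  [/\ (forall x, ~ lt x x),
      (forall x y z, lt x y -> lt y z -> lt x z),
      (forall x y, x = y \/ lt x y \/ lt y x) &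
      (forall g x y, lt x y -> lt (gmul g x) (gmul g y))].

Definition positive_cone (H : group) (lt : H -> H -> Prop) : H -> Prop :=
  fun h => lt gone h.

Definition language (X : finType) := seq X -> Prop.

Definition lang_class := forall X : finType, language X -> Prop.

Definition hom_image (X Y : finType) (h : X -> seq Y) (L : language X)
  : language Y :=
  fun v => exists w, L w /\ v = flatten (map h w).

Definition hom_preimage (X Y : finType) (h : X -> seq Y) (L : language Y)
  : language X :=
  fun w => L (flatten (map h w)).

Definition lang_inter (X : finType) (L1 L2 : language X) : language X :=
  fun w => L1 w /\ L2 w.

Definition lang_union (X : finType) (L1 L2 : language X) : language X :=
  fun w => L1 w \/ L2 w.

Definition lang_concat (X : finType) (L1 L2 : language X) : language X :=
  fun w => exists u v, [/\ L1 u, L2 v & w = u ++ v].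

Definition lang_star (X : finType) (L : language X) : language X :=
  fun w => exists ws : seq (seq X), (forall u, u \in ws -> L u) /\ w = flatten ws.

Definition lang_rev (X : finType) (L : language X) : language X :=
  fun w => L (rev w).

Definition regular : lang_class :=
  fun X L => exists (S : finType) (s0 : S) (d : S -> X -> S) (F : pred S),
    forall w, L w <-> F (foldl d s0 w).

Definition full_AFL (C : lang_class) : Prop :=
  (forall (X Y : finType) (h : X -> seq Y) (L : language X),
      C X L -> C Y (hom_image h L)) /\
  (forall (X Y : finType) (h : X -> seq Y) (L : language Y),
      C Y L -> C X (hom_preimage h L)) /\
  (forall (X : finType) (L R : language X),
      C X L -> regular R -> C X (lang_inter L R)) /\
  (forall (X : finType) (L1 L2 : language X),
      C X L1 -> C X L2 -> C X (lang_union L1 L2)) /\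
  (forall (X : finType) (L1 L2 : language X),
      C X L1 -> C X L2 -> C X (lang_concat L1 L2)) /\
  (forall (X : finType) (L : language X), C X L -> C X (lang_star L)).

Definition closed_under_reversal (C : lang_class) : Prop :=
  forall (X : finType) (L : language X), C X L -> C X (lang_rev L).

Definition C_left_order (C : lang_class) (H : group) (lt : H -> H -> Prop)
  : Prop :=
  left_order lt /\
  exists (X : finType) (g : X -> H) (L : language X),
    [/\ C X L,
        (forall h : H, exists w, eval_word g w = h) &
        (forall h : H, positive_cone lt h <-> exists w, L w /\ eval_word g w = h)].

Definition admits_C_left_order (C : lang_class) (H : group) : Prop :=
  exists lt : H -> H -> Prop, C_left_order C lt.

Section Wreath.
Variables N Q : group.

Definition fin_supp (f : Q -> N) : Prop :=
  exists s : list Q, forall q, ~ List.In q s -> f q = gone.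

Definition dsum := {f : Q -> N | fin_supp f}.

Lemma dsum_eq (f g : dsum) : (forall q, proj1_sig f q = proj1_sig g q) -> f = g.
Proof.
case: f g => [f fP] [g gP] /= e.
have efg : f = g by apply: functional_extensionality.
subst g; by rewrite (proof_irrelevance _ fP gP).
Qed.

(* Q acts on ⊕N by shifting indices: (a·f)(x) = f(a^-1 x). *)
Lemma shift_mul_supp (f g : dsum) (a : Q) :
  fin_supp (fun x => gmul (proj1_sig f x) (proj1_sig g (gmul (ginv a) x))).
Proof.
case: f g => [f [s fs]] [g [s' gs]] /=.
exists (s ++ List.map (gmul a) s') => x nx.
rewrite fs ?gs ?gmul1l //.
- move=> ix; apply: nx; apply: List.in_or_app; right.
  by rewrite -(gmulKV a x); apply: List.in_map.
- by move=> ix; apply: nx; apply: List.in_or_app; left.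
Qed.

Lemma one_supp : fin_supp (fun _ : Q => (@gone N)).
Proof. by exists nil. Qed.

Lemma inv_supp (f : dsum) (a : Q) :
  fin_supp (fun x => ginv (proj1_sig f (gmul a x))).
Proof.
case: f => [f [s fs]] /=.
exists (List.map (gmul (ginv a)) s) => x nx.
rewrite fs ?ginv1 // => ix; apply: nx.
by rewrite -(gmulVK a x); apply: List.in_map.
Qed.

Definition wcar := (dsum * Q)%type.

Definition wmul (u v : wcar) : wcar :=
  (exist _ _ (shift_mul_supp u.1 v.1 u.2), gmul u.2 v.2).

Definition wone : wcar := (exist _ _ one_supp, gone).

Definition winv (u : wcar) : wcar :=
  (exist _ _ (inv_supp u.1 u.2), ginv u.2).

Lemma wmulA (x y z : wcar) : wmul x (wmul y z) = wmul (wmul x y) z.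
Proof.
case: x y z => [f a] [g b] [h c]; rewrite /wmul /=; congr pair; last first.
  by rewrite gmulA.
apply: dsum_eq => q /=.
by rewrite ginvM gmulA gmulA.
Qed.

Lemma wmul1l (x : wcar) : wmul wone x = x.
Proof.
case: x => [f a]; rewrite /wmul /=; congr pair; last by rewrite gmul1l.
by apply: dsum_eq => q /=; rewrite ginv1 !gmul1l.
Qed.

Lemma wmul1r (x : wcar) : wmul x wone = x.
Proof.
case: x => [f a]; rewrite /wmul /=; congr pair; last by rewrite gmul1r.
by apply: dsum_eq => q /=; rewrite gmul1r.
Qed.

Lemma wmulVl (x : wcar) : wmul (winv x) x = wone.
Proof.
case: x => [f a]; rewrite /wmul /=; congr pair; last by rewrite gmulVl.
by apply: dsum_eq => q /=; rewrite ginvK gmulVl.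
Qed.

Lemma wmulVr (x : wcar) : wmul x (winv x) = wone.
Proof.
case: x => [f a]; rewrite /wmul /=; congr pair; last by rewrite gmulVr.
by apply: dsum_eq => q /=; rewrite gmulKV gmulVr.
Qed.

Definition wreath : group :=
  Group wmulA wmul1l wmul1r wmulVl wmulVr.
End Wreath.

From mathcomp Require Import all_boot.
From Stdlib Require Import FunctionalExtensionality PropExtensionality Classical ClassicalEpsilon.
From Stdlib Require List.

(* Order [N wr Q] by the sign of the [N]-coordinate of [u^-1 v] at the largest point
   of its support, or by the sign of its [Q]-coordinate when the support is empty.
   A positive element whose support has largest point [p] factors as a product
   [p n (s_1 m_1) ... (s_k m_k) q] of elements of [Q] and of the copy of [N] at [1],
   with [n] positive in [N], every [s_i] negative in [Q]
   (so that the points [p s_1 ... s_i] of the support decrease) and arbitrary [m_i].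
   The positive cone is thus the image of [Q^* P_N (P_Q^-1 N^* )^* Q^* + P_Q], which is
   obtained from the languages of the cones [P_N] and [P_Q] by rational operations,
   renaming of letters and, for the words [P_Q^-1] of negative elements, reversal.
   With arbitrary [n], and words of [Q^*] alone, the same products give every element,
   so these letters generate [N wr Q]. *)

Set Implicit Arguments.
Unset Strict Implicit.
Unset Printing Implicit Defensive.

Definition full_lang (X : finType) : language X := fun _ => True.

Definition rename_lang (X Y : finType) (phi : X -> Y) (L : language X) : language Y :=
  hom_image (fun x => [:: phi x]) L.

Lemma rename_langP (X Y : finType) (phi : X -> Y) (L : language X) v :
  rename_lang phi L v <-> exists2 w, L w & v = map phi w.
Proof.
have flat1 w : flatten (map (fun x => [:: phi x]) w) = map phi w by elim: w => //= x w ->.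
by split; [case=> w [h ->] | case=> w h ->]; exists w; rewrite ?flat1.
Qed.

(** * Regular languages via automata with silent moves *)

Record enfa (X : finType) := ENFA {
  est : finType;
  einit : pred est;
  efin : pred est;
  etrans : est -> option X -> est -> bool }.

Arguments est {X} A : rename.
Arguments einit {X} A _ : rename.
Arguments efin {X} A _ : rename.
Arguments etrans {X} A _ _ _ : rename.

Section Automata.
Variable X : finType.
Local Notation enfa := (enfa X).

(* [epath A t s w]: reading [w], [A] can move from [s] to [t]; the target
   comes first so that it stays fixed under induction. *)
Inductive epath (A : enfa) (t : est A) : est A -> seq X -> Prop :=
| epath_nil : epath t t [::]
| epath_eps (s m : est A) w : etrans A s None m -> epath t m w -> epath t s w
| epath_step (s m : est A) x w : etrans A s (Some x) m -> epath t m w -> epath t s (x :: w).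

Definition elang (A : enfa) : language X :=
  fun w => exists s t, [/\ einit A s, efin A t & epath t s w].

Lemma epath_cat A (s m t : est A) u v :
  epath m s u -> epath t m v -> epath t s (u ++ v).
Proof.
elim=> // [s' m' w e _ IH | s' m' x w e _ IH] /IH p.
- exact: epath_eps e p.
- exact: epath_step e p.
Qed.

Lemma epath_map (A B : enfa) (f : est A -> est B) :
  (forall s o t, etrans A s o t -> etrans B (f s) o (f t)) ->
  forall s t w, epath t s w -> epath (f t) (f s) w.
Proof.
move=> hf s t w; elim=> [|s' m w' e _ IH|s' m x w' e _ IH].
- exact: epath_nil.
- exact: epath_eps (hf _ _ _ e) IH.
- exact: epath_step (hf _ _ _ e) IH.
Qed.

Section SubsetConstruction.
Variable A : enfa.

Definition silent : rel (est A) := fun s t => etrans A s None t.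

Lemma connect_epath (s m t : est A) w :
  connect silent s m -> epath t m w -> epath t s w.
Proof.
move=> /connectP [p hp ->] {m}.
elim: p s hp => [|y p IH] s //= /andP [e hp] h.
exact: epath_eps e (IH y hp h).
Qed.

Lemma epath_nil_connect (s t : est A) : epath t s [::] -> connect silent s t.
Proof.
move e: [::] => w h; elim: h e => [|s' m w' ed _ IH|] // e.
exact: connect_trans (connect1 ed) (IH e).
Qed.

Lemma epath_consP (s t : est A) x w : epath t s (x :: w) ->
  exists u m, [/\ connect silent s u, etrans A u (Some x) m & epath t m w].
Proof.
move e: (x :: w) => l h.
elim: h x w e => [//|s' m w' ed _ IH|s' m x' w' ed hp _] x w e.
- have [u [m' [c e2 p]]] := IH _ _ e.
  by exists u, m'; split=> //; apply: connect_trans (connect1 ed) c.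
- by case: e => -> ->; exists s', m; split.
Qed.

Definition eclosure (B : {set est A}) : {set est A} :=
  [set t | [exists s in B, connect silent s t]].

Definition estep (B : {set est A}) (x : X) : {set est A} :=
  eclosure [set t | [exists s in B, etrans A s (Some x) t]].

Lemma foldl_estepP w : forall (B : {set est A}) t,
  t \in foldl estep (eclosure B) w <-> exists2 s, s \in B & epath t s w.
Proof.
elim: w => [|x w IH] B t /=.
  rewrite inE; split.
    by case/existsP=> s /andP [sB c]; exists s => //; exact: connect_epath c (epath_nil t).
  by case=> s sB p; apply/existsP; exists s; rewrite sB (epath_nil_connect p).
rewrite IH; split.
  case=> m /[!inE] /existsP [u /andP [/[!inE] /existsP [s /andP [sB c]] e]] p.
  by exists s => //; apply: connect_epath c (epath_step e p).
case=> s sB /epath_consP [u [m [c e p]]]; exists m => //.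
rewrite inE; apply/existsP; exists u; rewrite e andbT inE.
by apply/existsP; exists s; rewrite sB c.
Qed.

Lemma elang_regular : regular (elang A).
Proof.
exists {set est A}, (eclosure [set s | einit A s]), estep,
  (fun B : {set est A} => [exists t in B, efin A t]) => w; split.
  case=> s [t [i f p]]; apply/existsP; exists t; rewrite f andbT foldl_estepP.
  by exists s; rewrite ?inE.
by case/existsP=> t /andP [/foldl_estepP [s /[!inE] i p] f]; exists s, t.
Qed.
End SubsetConstruction.

Lemma regular_of_enfa (A : enfa) (L : language X) :
  (forall w, elang A w <-> L w) -> regular L.
Proof.
move=> hA; have [S [s0 [d [F hF]]]] := elang_regular A.
by exists S, s0, d, F => w; rewrite -hA.
Qed.

Definition dfa_enfa (S : finType) (s0 : S) (d : S -> X -> S) (F : pred S) :=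
  @ENFA X S (pred1 s0) F (fun s o t => if o is Some x then t == d s x else false).

Lemma regular_enfa (L : language X) :
  regular L -> exists A : enfa, forall w, L w <-> elang A w.
Proof.
case=> S [s0 [d [F hF]]]; exists (dfa_enfa s0 d F) => w; rewrite hF; split.
  have walk s : epath (A := dfa_enfa s0 d F) (foldl d s w) s w.
    elim: w s => [|x w IH] s; first exact: epath_nil.
    by apply: epath_step (IH _); rewrite /= eqxx.
  by move=> hw; exists s0, (foldl d s0 w); split; [exact: eqxx | exact: hw | exact: walk].
case=> s [t [/= /eqP -> f p]].
suff <- : t = foldl d s0 w by [].
by elim: p => //= s' m x w' /eqP -> _ ->.
Qed.

Lemma regular_full : regular (@full_lang X).
Proof. by exists unit, tt, (fun _ _ => tt), predT. Qed.

Definition union_enfa (A B : enfa) : enfa :=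
  @ENFA X (est A + est B)%type
    (fun s => match s with inl a => einit A a | inr b => einit B b end)
    (fun s => match s with inl a => efin A a | inr b => efin B b end)
    (fun s o t => match s, t with
                  | inl a, inl a' => etrans A a o a'
                  | inr b, inr b' => etrans B b o b'
                  | _, _ => false end).

Lemma union_epathP (A B : enfa) t s w : epath (A := union_enfa A B) t s w ->
  match s, t with
  | inl a, inl a' => epath a' a w
  | inr b, inr b' => epath b' b w
  | _, _ => False end.
Proof.
elim=> [|[a|b] [m|m] w' //= e _ IH|[a|b] [m|m] x w' //= e _ IH].
- by case: t => ?; exact: epath_nil.
- by case: t IH => // ? IH; exact: epath_eps e IH.
- by case: t IH => // ? IH; exact: epath_eps e IH.
- by case: t IH => // ? IH; exact: epath_step e IH.
- by case: t IH => // ? IH; exact: epath_step e IH.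
Qed.

Lemma regular_union (L1 L2 : language X) :
  regular L1 -> regular L2 -> regular (lang_union L1 L2).
Proof.
move=> /regular_enfa [A hA] /regular_enfa [B hB].
apply: (regular_of_enfa (A := union_enfa A B)) => w; split.
  case=> [[s|s]] [[t|t]] [/= i f /union_epathP p] //.
    by left; apply/hA; exists s, t.
  by right; apply/hB; exists s, t.
case=> [/hA [s [t [i f p]]]|/hB [s [t [i f p]]]].
  by exists (inl s), (inl t); split=> //; apply: (epath_map (B := union_enfa A B)) p.
by exists (inr s), (inr t); split=> //; apply: (epath_map (B := union_enfa A B)) p.
Qed.

Definition cat_enfa (A B : enfa) : enfa :=
  @ENFA X (est A + est B)%type
    (fun s => if s is inl a then einit A a else false)
    (fun s => if s is inr b then efin B b else false)
    (fun s o t => match s, t with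
                  | inl a, inl a' => etrans A a o a'
                  | inr b, inr b' => etrans B b o b'
                  | inl a, inr b => [&& o == None, efin A a & einit B b]
                  | inr _, inl _ => false end).

Lemma cat_epathP (A B : enfa) b s w : epath (A := cat_enfa A B) (inr b) s w ->
  match s with
  | inl a => exists u v a' b0, [/\ w = u ++ v, epath a' a u, efin A a',
                                   einit B b0 & epath b b0 v]
  | inr b1 => epath b b1 w end.
Proof.
elim=> [|[a|b1] [m|m] w' //= e _ IH|[a|b1] [m|m] x w' //= e _ IH].
- exact: epath_nil.
- case: IH => u [v [a' [b0 [-> p f i q]]]]; exists u, v, a', b0; split=> //.
  exact: epath_eps e p.
- by case/andP: e => f i; exists [::], w', a, m; split=> //; exact: epath_nil.
- exact: epath_eps e IH.
- case: IH => u [v [a' [b0 [-> p f i q]]]]; exists (x :: u), v, a', b0.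
  by split=> //; exact: epath_step e p.
- exact: epath_step e IH.
Qed.

Lemma regular_concat (L1 L2 : language X) :
  regular L1 -> regular L2 -> regular (lang_concat L1 L2).
Proof.
move=> /regular_enfa [A hA] /regular_enfa [B hB].
apply: (regular_of_enfa (A := cat_enfa A B)) => w; split.
  case=> [[s|s]] [[t|t]] [//= i f /cat_epathP [u [v [a' [b0 [-> p f' i' q]]]]]].
  by exists u, v; split; [apply/hA; exists s, a' | apply/hB; exists b0, t |].
case=> u [v [/hA [s [a' [i f p]]] /hB [b0 [t [i' f' q]]] ->]].
exists (inl s), (inr t); split=> //.
apply: (epath_cat (A := cat_enfa A B) (m := inl a')).
  exact: (epath_map (B := cat_enfa A B)) p.
apply: (epath_eps (A := cat_enfa A B) (m := inr b0)); first by rewrite /= f i'.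
exact: (epath_map (B := cat_enfa A B)) q.
Qed.

Definition star_enfa (A : enfa) : enfa :=
  @ENFA X (option (est A)) (pred1 None) (pred1 None)
    (fun s o t => match s, t with
                  | Some a, Some a' => etrans A a o a'
                  | None, Some a => (o == None) && einit A a
                  | Some a, None => (o == None) && efin A a
                  | None, None => false end).

Lemma star_epathP (A : enfa) s w : epath (A := star_enfa A) None s w ->
  match s with
  | None => lang_star (elang A) w
  | Some a => exists u r a', [/\ w = u ++ r, epath a' a u, efin A a'
                                 & lang_star (elang A) r] end.
Proof.
elim=> [|[a|] [m|] w' //= e _ IH|[a|] [m|] x w' //= e _ IH].
- by exists [::].
- case: IH => u [r [a' [-> p f st]]]; exists u, r, a'; split=> //.
  exact: epath_eps e p.
- by exists [::], w', a; split=> //; exact: epath_nil.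
- case: IH => u [r [a' [-> p f [ws [hws ->]]]]].
  exists (u :: ws); split=> // u'; rewrite inE => /orP [/eqP ->|]; last exact: hws.
  by exists m, a'.
- case: IH => u [r [a' [-> p f st]]]; exists (x :: u), r, a'; split=> //.
  exact: epath_step e p.
Qed.

Lemma regular_star (L : language X) : regular L -> regular (lang_star L).
Proof.
move=> /regular_enfa [A hA].
have starA w : lang_star L w <-> lang_star (elang A) w.
  by split; case=> ws [h ->]; exists ws; split=> // u /h /hA.
apply: (regular_of_enfa (A := star_enfa A)) => w; rewrite starA; split.
  by case=> [[s|]] [[t|]] [//= i f /star_epathP].
case=> ws [hws ->]; exists None, None; split=> //.
elim: ws hws => [|u ws IH] hws /=; first exact: epath_nil.
have [a0 [a' [i f p]]] := hws u (mem_head _ _).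
apply: (epath_eps (A := star_enfa A) (m := Some a0)); first by rewrite /= i.
apply: (epath_cat (A := star_enfa A) (m := Some a')); first exact: (epath_map (B := star_enfa A)) p.
apply: (epath_eps (A := star_enfa A) (m := None)); first by rewrite /= f.
by apply: IH => u' hu; apply: hws; rewrite inE hu orbT.
Qed.

Definition rev_enfa (A : enfa) : enfa :=
  @ENFA X (est A) (efin A) (einit A) (fun s o t => etrans A t o s).

Lemma rev_epath (A : enfa) s t w :
  epath (A := A) t s w -> epath (A := rev_enfa A) s t (rev w).
Proof.
elim=> [|s' m w' e _ IH|s' m x w' e _ IH]; first exact: epath_nil.
  rewrite -[rev w']cats0; apply: (epath_cat IH).
  exact: (epath_eps (A := rev_enfa A) (m := s') e (epath_nil _)).
rewrite rev_cons -cats1; apply: (epath_cat IH).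
exact: (epath_step (A := rev_enfa A) (m := s') e (epath_nil _)).
Qed.

Lemma regular_rev (L : language X) : regular L -> regular (lang_rev L).
Proof.
(* destructing [A] makes [rev_enfa (rev_enfa A)] convertible to [A] *)
move=> /regular_enfa [[S i0 f0 d] hA].
apply: (regular_of_enfa (A := rev_enfa (ENFA i0 f0 d))) => w; split.
  case=> s [t [i f /rev_epath p]]; apply/hA; exists t, s; split=> //.
move/hA=> [s [t [i f /rev_epath p]]]; exists t, s; split=> //.
by rewrite revK in p.
Qed.
End Automata.

Definition rename_enfa (X Y : finType) (phi : X -> Y) (A : enfa X) : enfa Y :=
  @ENFA Y (est A) (einit A) (efin A)
    (fun s o t => if o is Some y then [exists x, (phi x == y) && etrans A s (Some x) t]
                  else etrans A s None t).

Lemma rename_epathP (X Y : finType) (phi : X -> Y) (A : enfa X) s t v :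
  epath (A := rename_enfa phi A) t s v <-> exists2 w, epath (A := A) t s w & v = map phi w.
Proof.
split.
  elim=> [|s' m w' e _ [w p ->]|s' m y w' /existsP [x /andP [/eqP <- e]] _ [w p ->]].
  - by exists [::]; first exact: epath_nil.
  - by exists w; first exact: (epath_eps (A := A) e p).
  - by exists (x :: w); first exact: epath_step e p.
case=> w p ->; elim: p => [|s' m w' e _ IH|s' m x w' e _ IH] /=.
- exact: epath_nil.
- exact: (epath_eps (A := rename_enfa phi A) e IH).
- apply: (epath_step (A := rename_enfa phi A)) IH.
  by apply/existsP; exists x; rewrite eqxx e.
Qed.

Lemma regular_rename (X Y : finType) (phi : X -> Y) (L : language X) :
  regular L -> regular (rename_lang phi L).
Proof.
move=> /regular_enfa [A hA].
apply: (regular_of_enfa (A := rename_enfa phi A)) => v; rewrite rename_langP; split.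
  by case=> s [t [i f /rename_epathP [w p ->]]]; exists w => //; apply/hA; exists s, t.
case=> w /hA [s [t [i f p]]] ->; exists s, t; split=> //.
by apply/rename_epathP; exists w.
Qed.

Section LeftOrder.
Variables (H : group) (lt : H -> H -> Prop).
Hypothesis lo : left_order lt.

Lemma lo_irr x : ~ lt x x. Proof. by case: lo. Qed.

Lemma lo_trans x y z : lt x y -> lt y z -> lt x z.
Proof. by case: lo => _ + _ _; apply. Qed.

Lemma lo_total x y : x = y \/ lt x y \/ lt y x. Proof. by case: lo. Qed.

Lemma lo_mul2l g x y : lt x y -> lt (gmul g x) (gmul g y).
Proof. by case: lo => _ _ _; apply. Qed.

Lemma lo_asym x y : lt x y -> ~ lt y x.
Proof. by move=> xy yx; apply: (lo_irr (lo_trans xy yx)). Qed.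

Lemma lo_mulVl x y g : lt (gmul g x) y -> lt x (gmul (ginv g) y).
Proof. by move=> /(lo_mul2l (ginv g)); rewrite gmulVK. Qed.

Lemma lo_pos_mul a b : lt gone a -> lt gone b -> lt gone (gmul a b).
Proof.
by move=> ha hb; apply: lo_trans ha _; rewrite -{1}(gmul1r a); apply: lo_mul2l.
Qed.

Lemma lo_neg_inv a : lt a gone -> lt gone (ginv a).
Proof. by move=> /(lo_mul2l (ginv a)); rewrite gmulVl gmul1r. Qed.

Lemma lo_pos_inv a : lt gone a -> lt (ginv a) gone.
Proof. by move=> /(lo_mul2l (ginv a)); rewrite gmulVl gmul1r. Qed.

Lemma lo_finite_max (Pr : H -> Prop) (s : list H) :
  (forall y, Pr y -> List.In y s) -> (exists y, Pr y) ->
  exists2 p, Pr p & forall y, Pr y -> ~ lt p y.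
Proof.
elim: s Pr => [|a s IH] Pr hs [y0 py0]; first by case: (hs y0 py0).
have [[y1 [py1 ny1]]|only_a] := classic (exists y, Pr y /\ y <> a); last first.
  have pa : Pr a by apply: NNPP => npa; apply: only_a; exists y0; split=> // e; rewrite e in py0.
  exists a => // y py; have -> : y = a by apply: NNPP => nya; apply: only_a; exists y.
  exact: lo_irr.
have [p [pp pa] hp] : exists2 p, Pr p /\ p <> a & forall y, Pr y /\ y <> a -> ~ lt p y.
  apply: IH; last by exists y1.
  by move=> y [/hs [ay|//] /(_ (esym ay))].
have [pa'|npa'] := classic (Pr a); last first.
  by exists p => // y py; apply: hp; split=> // ya; rewrite ya in py.
have [/pa //|[lpa|lap]] := lo_total p a.
- exists a => // y py lay; case: (classic (y = a)) => [ya|ya].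
    by rewrite ya in lay; apply: lo_irr lay.
  by apply: (hp y); [split | apply: lo_trans lpa lay].
- exists p => // y py; case: (classic (y = a)) => [->|ya]; first exact: lo_asym.
  by apply: hp.
Qed.
End LeftOrder.

Section ConeOrder.
Variables (G : group) (P : G -> Prop).
Hypotheses (P_irr : ~ P gone) (P_mul : forall x y, P x -> P y -> P (gmul x y))
  (P_total : forall x, x = gone \/ P x \/ P (ginv x)).

Definition cone_lt (x y : G) := P (gmul (ginv x) y).

Lemma cone_left_order : left_order cone_lt.
Proof.
split.
- by move=> x; rewrite /cone_lt gmulVl.
- by move=> x y z xy /(P_mul xy); rewrite -gmulA gmulKV.
- move=> x y; rewrite /cone_lt; case: (P_total (gmul (ginv x) y)) => [e|[h|h]].
  + by left; rewrite -(gmulKV x y) e gmul1r.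
  + by right; left.
  + by right; right; rewrite ginvM ginvK in h.
- by move=> g x y; rewrite /cone_lt ginvM -gmulA gmulVK.
Qed.

Lemma positive_cone_lt h : positive_cone cone_lt h <-> P h.
Proof. by rewrite /positive_cone /cone_lt ginv1 gmul1l. Qed.
End ConeOrder.

Lemma eval_word_cat (X : Type) (H : group) (g : X -> H) u v :
  eval_word g (u ++ v) = gmul (eval_word g u) (eval_word g v).
Proof. by elim: u => [|x u IH] /=; rewrite ?gmul1l // IH gmulA. Qed.

Lemma eval_word_map (X Y : Type) (H : group) (f : X -> Y) (g : Y -> H) w :
  eval_word g (map f w) = eval_word (g \o f) w.
Proof. by elim: w => //= x w ->. Qed.

Lemma eval_word_morph (X : Type) (H K : group) (f : H -> K) (g : X -> H) w :
  f gone = gone -> (forall x y, f (gmul x y) = gmul (f x) (f y)) ->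
  eval_word (fun x => f (g x)) w = f (eval_word g w).
Proof. by move=> f1 fM; elim: w => [|x w IH] /=; rewrite ?f1 // fM IH. Qed.

(** * The order on the wreath product *)

Definition classic_eq_dec (A : Type) (x y : A) : {x = y} + {x <> y} :=
  excluded_middle_informative (x = y).

Definition classic_eqb (A : Type) (x y : A) : bool := classic_eq_dec x y.

Lemma classic_eqbP (A : Type) (x y : A) : reflect (x = y) (classic_eqb x y).
Proof. by rewrite /classic_eqb; case: classic_eq_dec => h; constructor. Qed.

Section Wreath.
Variables N Q : group.
Local Notation W := (wreath N Q).

Definition wfun (u : W) : Q -> N := proj1_sig u.1.

Lemma wreath_eq (u v : W) : wfun u =1 wfun v -> u.2 = v.2 -> u = v.
Proof. by case: u v => [f a] [g b] /= h e; congr pair => //; apply: dsum_eq. Qed.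

Lemma wfunM (u v : W) z : wfun (gmul u v) z = gmul (wfun u z) (wfun v (gmul (ginv u.2) z)).
Proof. by []. Qed.

Lemma wfunV (u : W) z : wfun (ginv u) z = ginv (wfun u (gmul u.2 z)).
Proof. by []. Qed.

Lemma wsndM (u v : W) : (gmul u v).2 = gmul u.2 v.2. Proof. by []. Qed.

Lemma wsndV (u : W) : (ginv u).2 = ginv u.2. Proof. by []. Qed.

Lemma wfun_supp (u : W) : exists s, forall z, ~ List.In z s -> wfun u z = gone.
Proof. by case: u => [[f [s hs]] a]; exists s. Qed.

Definition wQ (q : Q) : W := (exist _ _ (one_supp N Q), q).

Lemma delta_supp (n : N) : fin_supp (fun z : Q => if classic_eqb z gone then n else gone).
Proof. by exists [:: gone] => q nq; case: classic_eqbP => // e; case: nq; left. Qed.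

Definition wN (n : N) : W := (exist _ _ (delta_supp n), gone).

Lemma wfun_wQ q z : wfun (wQ q) z = gone. Proof. by []. Qed.

Lemma wfun_wN n z : wfun (wN n) z = if classic_eqb z gone then n else gone.
Proof. by []. Qed.

Lemma wQM a b : gmul (wQ a) (wQ b) = wQ (gmul a b).
Proof. by apply: wreath_eq => // z; rewrite wfunM !wfun_wQ gmul1l. Qed.

Lemma wNM a b : gmul (wN a) (wN b) = wN (gmul a b).
Proof.
apply: wreath_eq => [z|] /=; last by rewrite gmul1l.
rewrite wfunM !wfun_wN ginv1 gmul1l.
by case: classic_eqb; rewrite ?gmul1l.
Qed.

Lemma wQ1 : wQ gone = gone. Proof. by apply: wreath_eq. Qed.

Lemma wN1 : wN gone = gone.
Proof. by apply: wreath_eq => // z; rewrite wfun_wN; case: classic_eqb. Qed.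

Lemma wfun_mulwQ (u : W) q : wfun (gmul u (wQ q)) =1 wfun u.
Proof. by move=> z; rewrite wfunM wfun_wQ gmul1r. Qed.

Lemma wfun_wQ_mul p (v : W) z : wfun (gmul (wQ p) v) z = wfun v (gmul (ginv p) z).
Proof. by rewrite wfunM wfun_wQ gmul1l. Qed.

Lemma wfun_wQwN p n (v : W) z :
  wfun (gmul (gmul (wQ p) (wN n)) v) z =
  gmul (if classic_eqb z p then n else gone) (wfun (gmul (wQ p) v) z).
Proof.
rewrite wfunM wfun_wQ_mul wfun_wQ_mul wfun_wN /= gmul1r.
case: (classic_eqbP z p) => [->|zp]; first by rewrite gmulVl; case: classic_eqbP.
by case: classic_eqbP => // e; case: zp; rewrite -(gmulKV p z) e gmul1r.
Qed.

Definition wdrop_fun (u : W) (p : Q) : Q -> N :=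
  fun z => if classic_eqb z p then gone else wfun u z.

Lemma wdrop_supp (u : W) p : fin_supp (wdrop_fun u p).
Proof.
have [s hs] := wfun_supp u.
by exists s => z /hs uz; rewrite /wdrop_fun uz; case: classic_eqb.
Qed.

Definition wdrop (u : W) p : W := (exist _ _ (wdrop_supp u p), u.2).

Lemma wfun_wdrop u p z : wfun (wdrop u p) z = wdrop_fun u p z. Proof. by []. Qed.

Lemma wfun_wdrop_wN (u v : W) p : wfun (gmul (wQ p) v) =1 wfun (wdrop u p) ->
  wfun (gmul (gmul (wQ p) (wN (wfun u p))) v) =1 wfun u.
Proof.
move=> hv z; rewrite wfun_wQwN hv wfun_wdrop /wdrop_fun.
by case: classic_eqbP => [->|_]; rewrite ?gmul1r ?gmul1l.
Qed.

Variables (ltN : N -> N -> Prop) (ltQ : Q -> Q -> Prop).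
Hypotheses (loN : left_order ltN) (loQ : left_order ltQ).

Definition vanish_above (u : W) (p : Q) := forall y, ltQ p y -> wfun u y = gone.

Definition wpos (u : W) : Prop :=
  (exists p, ltN gone (wfun u p) /\ vanish_above u p) \/
  (wfun u =1 (fun _ => gone) /\ ltQ gone u.2).

Lemma supp_max_exists (u : W) : ~ wfun u =1 (fun _ => gone) ->
  exists p, wfun u p <> gone /\ vanish_above u p.
Proof.
move=> /not_all_ex_not [z0 hz0]; have [s hs] := wfun_supp u.
have [p pp hp] := lo_finite_max loQ (Pr := fun z => wfun u z <> gone) (s := s)
  (fun y uy => NNPP _ (fun ny => uy (hs y ny))) (ex_intro _ z0 hz0).
by exists p; split=> // y py; apply: NNPP => uy; apply: hp uy py.
Qed.

Lemma wpos_irr : ~ wpos gone.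
Proof. by case=> [[p [/lo_irr]]|[_ /lo_irr]]. Qed.

Lemma wpos_mul u v : wpos u -> wpos v -> wpos (gmul u v).
Proof.
have shift p y : ltQ (gmul u.2 p) y -> ltQ p (gmul (ginv u.2) y) by apply: lo_mulVl.
case=> [[p [hp hu]]|[hu ha]]; case=> [[p' [hp' hv]]|[hv hb]].
- have [e|[l|l]] := lo_total loQ p (gmul u.2 p').
  + left; exists p; split.
      by rewrite wfunM e gmulVK -e; apply: lo_pos_mul.
    by move=> y ly; rewrite wfunM hu // hv ?gmul1l //; apply: shift; rewrite -e.
  + left; exists (gmul u.2 p'); split; first by rewrite wfunM hu // gmulVK gmul1l.
    move=> y ly; rewrite wfunM hu; last exact: lo_trans l ly.
    by rewrite hv ?gmul1l //; apply: shift.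
  + left; exists p; split.
      by rewrite wfunM (hv (gmul (ginv u.2) p)) ?gmul1r //; apply: shift.
    move=> y ly; rewrite wfunM hu // hv ?gmul1l //; apply: shift.
    exact: lo_trans l ly.
- left; exists p; split; first by rewrite wfunM hv gmul1r.
  by move=> y ly; rewrite wfunM hu // hv gmul1l.
- left; exists (gmul u.2 p'); split; first by rewrite wfunM hu gmul1l gmulVK.
  by move=> y ly; rewrite wfunM hu gmul1l hv //; apply: shift.
- right; split; first by move=> y; rewrite wfunM hu hv gmul1l.
  by rewrite wsndM; apply: lo_pos_mul.
Qed.

Lemma wpos_total u : u = gone \/ wpos u \/ wpos (ginv u).
Proof.
have [h|h] := classic (wfun u =1 (fun _ => gone)).
  have [e|[l|l]] := lo_total loQ u.2 gone.
  - by left; apply: wreath_eq.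
  - right; right; right; split; first by move=> y; rewrite wfunV h ginv1.
    by rewrite wsndV; apply: lo_neg_inv.
  - by right; left; right.
have [p [np hp]] := supp_max_exists h.
have [e|[l|l]] := lo_total loN (wfun u p) gone; first by case: np.
  right; right; left; exists (gmul (ginv u.2) p); split.
    by rewrite wfunV gmulKV; apply: lo_neg_inv.
  move=> y /(lo_mul2l loQ u.2); rewrite gmulKV => ly.
  by rewrite wfunV hp ?ginv1.
by right; left; left; exists p.
Qed.

Lemma wreath_left_order : left_order (cone_lt wpos).
Proof. exact: cone_left_order wpos_irr wpos_mul wpos_total. Qed.

Definition supp_below (p : Q) (f : Q -> N) := forall z, ~ ltQ z p -> f z = gone.

Lemma supp_below_wdrop u p : vanish_above u p -> supp_below p (wfun (wdrop u p)).
Proof.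
move=> hp z nzp; rewrite wfun_wdrop /wdrop_fun.
case: classic_eqbP => // zp; apply: hp.
by have [/zp|[/nzp|]] := lo_total loQ z p.
Qed.
End Wreath.

(** * A language for the positive cone of the wreath product *)

Section ConeLanguage.
Variables (N Q : group) (ltN : N -> N -> Prop) (ltQ : Q -> Q -> Prop).
Hypothesis loQ : left_order ltQ.
Variables (XN XQ : finType) (gN : XN -> N) (gQ : XQ -> Q)
  (LN : language XN) (LQ : language XQ).
Hypotheses (gN_onto : forall n, exists w, eval_word gN w = n)
  (gQ_onto : forall q, exists w, eval_word gQ w = q)
  (LN_cone : forall n, ltN gone n <-> exists w, LN w /\ eval_word gN w = n)
  (LQ_cone : forall q, ltQ gone q <-> exists w, LQ w /\ eval_word gQ w = q).
Local Notation W := (wreath N Q).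

Definition wletter : finType := (XN + (XQ + XQ))%type.
Local Notation iN := (fun a : XN => inl a : wletter).
Local Notation iQ := (fun b : XQ => inr (inl b) : wletter).
Local Notation iQV := (fun b : XQ => inr (inr b) : wletter).

Definition wgen (x : wletter) : W :=
  match x with
  | inl a => wN Q (gN a)
  | inr (inl b) => wQ N (gQ b)
  | inr (inr b) => wQ N (ginv (gQ b))
  end.

Local Notation ev := (eval_word wgen).

Lemma ev_iN v : ev (map iN v) = wN Q (eval_word gN v).
Proof.
by rewrite eval_word_map; apply: eval_word_morph; [apply: wN1 | move=> x y; rewrite wNM].
Qed.

Lemma ev_iQ w : ev (map iQ w) = wQ N (eval_word gQ w).
Proof.
by rewrite eval_word_map; apply: eval_word_morph; [apply: wQ1 | move=> x y; rewrite wQM].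
Qed.

Lemma ev_iQV w : ev (map iQV w) = wQ N (ginv (eval_word gQ (rev w))).
Proof.
elim: w => [|b w IH]; first by rewrite /= ginv1 wQ1.
have -> : ev (map iQV (b :: w)) = gmul (wQ N (ginv (gQ b))) (ev (map iQV w)) by [].
by rewrite IH wQM rev_cons -cats1 eval_word_cat /= gmul1r ginvM.
Qed.

Definition Qwords := rename_lang iQ (@full_lang XQ).
Definition Nwords := rename_lang iN (@full_lang XN).
Definition Npos := rename_lang iN LN.
Definition Qpos := rename_lang iQ LQ.
Definition Qneg := rename_lang iQV (lang_rev LQ).
Definition neg_steps := lang_star (lang_concat Qneg Nwords).
Definition cone_lang :=
  lang_union (lang_concat (lang_concat (lang_concat Qwords Npos) neg_steps) Qwords) Qpos.

Lemma Qwords_complete q : exists2 w, Qwords w & ev w = wQ N q.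
Proof.
have [w <-] := gQ_onto q.
by exists (map iQ w); [apply/rename_langP; exists w | rewrite ev_iQ].
Qed.

Lemma Nwords_complete n : exists2 w, Nwords w & ev w = wN Q n.
Proof.
have [w <-] := gN_onto n.
by exists (map iN w); [apply/rename_langP; exists w | rewrite ev_iN].
Qed.

Lemma Qneg_sound t : Qneg t -> exists2 s, ltQ s gone & ev t = wQ N s.
Proof.
case/rename_langP=> w hw ->; rewrite ev_iQV; eexists; last by [].
by apply: lo_pos_inv => //; apply/LQ_cone; exists (rev w).
Qed.

Lemma Qneg_complete s : ltQ s gone -> exists2 t, Qneg t & ev t = wQ N s.
Proof.
move=> /(lo_neg_inv loQ) /LQ_cone [w [hw ew]].
exists (map iQV (rev w)); first by apply/rename_langP; exists (rev w); rewrite // /lang_rev revK.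
by rewrite ev_iQV revK ew ginvK.
Qed.

Lemma neg_steps_sound r :
  neg_steps r -> forall p, supp_below ltQ p (wfun (gmul (wQ N p) (ev r))).
Proof.
case=> ws [hws ->] {r}; elim: ws hws => [|u ws IH] hws p z nzp.
  by rewrite wfun_wQ_mul.
have [t [m [/Qneg_sound [s sneg et] /rename_langP [v _ ->] ->]]] := hws u (mem_head _ _).
have lps : ltQ (gmul p s) p by rewrite -{2}(gmul1r p); apply: lo_mul2l.
rewrite !eval_word_cat et ev_iN gmulA gmulA wQM wfun_wQwN.
case: classic_eqbP => [zps|_]; first by rewrite zps in nzp.
rewrite gmul1l; apply: IH => [u' hu'|]; first by apply: hws; rewrite inE hu' orbT.
by move=> lz; apply: nzp; apply: lo_trans lz lps.
Qed.

Lemma neg_steps_complete (s : list Q) (u : W) p :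
  (forall z, ~ List.In z s -> wfun u z = gone) -> supp_below ltQ p (wfun u) ->
  exists2 r, neg_steps r & wfun (gmul (wQ N p) (ev r)) =1 wfun u.
Proof.
have [n] := ubnP (List.length s); elim: n => // n IH in s u p *.
move=> /ltnSE hl hs hb; have [u0|u_nz] := classic (wfun u =1 (fun _ => gone)).
  by exists [::]; [exists [::] | move=> z; rewrite wfun_wQ_mul u0].
have [p' [up' hp']] := supp_max_exists loQ u_nz.
have lp'p : ltQ p' p by apply: NNPP => /hb.
have p's : List.In p' s by apply: NNPP => /hs.
have [|||r' hr' er'] := IH (List.remove (@classic_eq_dec Q) p' s) (wdrop u p') p'.
- apply: leq_trans hl; apply/ltP; exact: List.remove_length_lt.
- move=> z nzs; rewrite wfun_wdrop /wdrop_fun; case: classic_eqbP => // zp'.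
  by apply: hs => zs; apply: nzs; apply: List.in_in_remove.
- exact: supp_below_wdrop.
have [t ht et] : exists2 t, Qneg t & ev t = wQ N (gmul (ginv p) p').
  by apply: Qneg_complete; rewrite -(gmulVl p); apply: lo_mul2l.
have [m hm em] := Nwords_complete (wfun u p').
exists ((t ++ m) ++ r').
  case: hr' => ws [hws ->]; exists ((t ++ m) :: ws); split=> // w.
  by rewrite inE => /orP [/eqP -> | /hws]; first by exists t, m.
rewrite !eval_word_cat et em gmulA gmulA wQM gmulKV.
exact: wfun_wdrop_wN.
Qed.

Lemma vanish_above_decomp u p : vanish_above ltQ u p ->
  exists r q, neg_steps r /\ u = gmul (gmul (gmul (wQ N p) (wN Q (wfun u p))) (ev r)) (wQ N q).
Proof.
move=> hp; have [s hs] := wfun_supp u.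
have [||r hr er] := neg_steps_complete (s := s) (u := wdrop u p) (p := p).
- move=> z /hs uz; rewrite wfun_wdrop /wdrop_fun uz; by case: classic_eqb.
- exact: supp_below_wdrop.
exists r, (gmul (ginv (gmul p (ev r).2)) u.2); split=> //.
apply: wreath_eq => [z|]; first by rewrite wfun_mulwQ wfun_wdrop_wN.
by rewrite /= gmul1r gmulKV.
Qed.

Lemma cone_lang_sound w : cone_lang w -> wpos ltN ltQ (ev w).
Proof.
case=> [[w1 [b [[w2 [r [[a [n [ha hn ->]]] hr ->]]] hb ->]]]|/rename_langP [w' hw' ->]];
  last by rewrite ev_iQ; right; split=> //; apply/LQ_cone; exists w'.
case/rename_langP: ha => a' _ ->; case/rename_langP: hn => n' hn' ->.
case/rename_langP: hb => b' _ ->.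
rewrite !eval_word_cat !ev_iQ ev_iN; left; exists (eval_word gQ a'); split.
  rewrite wfun_mulwQ wfun_wQwN; case: classic_eqbP => // _.
  rewrite (neg_steps_sound hr (lo_irr loQ (x := _))) gmul1r.
  by apply/LN_cone; exists n'.
move=> y ly; rewrite wfun_mulwQ wfun_wQwN (neg_steps_sound hr (lo_asym loQ ly)) gmul1r.
by case: classic_eqbP => // yp; rewrite yp in ly; case: (lo_irr loQ ly).
Qed.

Lemma cone_lang_complete u : wpos ltN ltQ u -> exists2 w, cone_lang w & ev w = u.
Proof.
case=> [[p [hp htop]]|[hu hq]]; last first.
  have [w [hw ew]] := (LQ_cone u.2).1 hq.
  exists (map iQ w); first by right; apply/rename_langP; exists w.
  by rewrite ev_iQ ew; apply: wreath_eq => // z; rewrite hu.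
have [r [q [hr eu]]] := vanish_above_decomp htop.
have [a ha ea] := Qwords_complete p.
have [n [hn en]] := (LN_cone (wfun u p)).1 hp.
have [b hb eb] := Qwords_complete q.
exists (((a ++ map iN n) ++ r) ++ b).
  left; exists ((a ++ map iN n) ++ r), b; split=> //; exists (a ++ map iN n), r.
  by split=> //; exists a, (map iN n); split=> //; apply/rename_langP; exists n.
by rewrite !eval_word_cat ea eb ev_iN en -eu.
Qed.

Lemma wgen_onto u : exists w, ev w = u.
Proof.
have [u0|u_nz] := classic (wfun u =1 (fun _ => gone)).
  have [w _ ew] := Qwords_complete u.2.
  by exists w; rewrite ew; apply: wreath_eq => // z; rewrite u0.
have [p [_ htop]] := supp_max_exists loQ u_nz.
have [r [q [_ eu]]] := vanish_above_decomp htop.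
have [a _ ea] := Qwords_complete p.
have [m _ em] := Nwords_complete (wfun u p).
have [b _ eb] := Qwords_complete q.
by exists (((a ++ m) ++ r) ++ b); rewrite !eval_word_cat ea em eb -eu.
Qed.

Lemma wreath_positive_cone u :
  positive_cone (cone_lt (wpos ltN ltQ)) u <-> exists w, cone_lang w /\ ev w = u.
Proof.
rewrite positive_cone_lt; split; first by case/cone_lang_complete=> w; exists w.
by case=> w [/cone_lang_sound + <-].
Qed.
End ConeLanguage.

Record rational_closed (C : lang_class) : Prop := {
  rc_rename : forall (X Y : finType) (phi : X -> Y) L, C X L -> C Y (rename_lang phi L);
  rc_rev : closed_under_reversal C;
  rc_union : forall (X : finType) (L1 L2 : language X),
    C X L1 -> C X L2 -> C X (lang_union L1 L2);
  rc_concat : forall (X : finType) (L1 L2 : language X),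
    C X L1 -> C X L2 -> C X (lang_concat L1 L2);
  rc_star : forall (X : finType) (L : language X), C X L -> C X (lang_star L);
  rc_full : forall X : finType, C X (@full_lang X) }.

Lemma regular_rational_closed : rational_closed regular.
Proof.
split.
- exact: regular_rename.
- exact: regular_rev.
- exact: regular_union.
- exact: regular_concat.
- exact: regular_star.
- exact: regular_full.
Qed.

(* The full language is the preimage of [L0^*], for any [L0], under the
   morphism erasing every letter. *)
Lemma full_AFL_rational_closed C :
  full_AFL C -> closed_under_reversal C -> (exists X L, C X L) -> rational_closed C.
Proof.
move=> [himg [hpre [_ [hun [hcat hstar]]]]] hrev [X0 [L0 CL0]]; split=> //.
- by move=> X Y phi L; apply: himg.
move=> Y; have erase : forall w, flatten (map (fun _ : Y => [::] : seq Y) w) = [::].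
  by elim.
suff -> : @full_lang Y =
    hom_preimage (fun _ => [::]) (lang_star (hom_image (fun _ : X0 => [::] : seq Y) L0)).
  by apply: hpre; apply: hstar; apply: himg.
apply: functional_extensionality => w; apply: propositional_extensionality.
by split=> // _; rewrite /hom_preimage erase; exists [::].
Qed.

Lemma cone_lang_in_class C (XN XQ : finType) (LN : language XN) (LQ : language XQ) :
  rational_closed C -> C XN LN -> C XQ LQ -> C _ (cone_lang LN LQ).
Proof.
case=> hren hrev hun hcat hstar hfull CN CQ.
apply: hun; last exact: hren.
apply: (hcat); last exact/hren/hfull.
apply: (hcat); first by apply: (hcat); apply: (hren).
by apply/hstar/hcat; apply: (hren); [apply: hrev | apply: hfull].
Qed.

Lemma admits_C_left_order_wreath C (N Q : group) : rational_closed C ->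
  admits_C_left_order C N -> admits_C_left_order C Q -> admits_C_left_order C (wreath N Q).
Proof.
move=> hC [ltN [loN [XN [gN [LN [CN gN_onto LN_cone]]]]]].
move=> [ltQ [loQ [XQ [gQ [LQ [CQ gQ_onto LQ_cone]]]]]].
exists (cone_lt (wpos ltN ltQ)); split; first exact: wreath_left_order.
exists (wletter XN XQ), (wgen gN gQ), (cone_lang LN LQ); split.
- exact: cone_lang_in_class.
- exact (wgen_onto loQ gN_onto gQ_onto LQ_cone).
- exact (wreath_positive_cone loQ gN_onto gQ_onto LN_cone LQ_cone).
Qed.

Theorem proposition3p20 :
  (forall C : lang_class,
     full_AFL C -> closed_under_reversal C ->
     forall N Q : group,
       finitely_generated N -> finitely_generated Q ->
       admits_C_left_order C N -> admits_C_left_order C Q ->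
       admits_C_left_order C (wreath N Q))
  /\
  (forall N Q : group,
     finitely_generated N -> finitely_generated Q ->
     admits_C_left_order regular N -> admits_C_left_order regular Q ->
     admits_C_left_order regular (wreath N Q)).
Proof.
split.
  (* finite generation is already part of a C-left-order *)
  move=> C hafl hrev N Q _ _ hN hQ.
  have hC : rational_closed C.
    apply: full_AFL_rational_closed => //.
    by case: (hN) => _ [_ [X [_ [L [CL _ _]]]]]; exists X, L.
  exact: admits_C_left_order_wreath hC hN hQ.
by move=> N Q _ _; apply: admits_C_left_order_wreath regular_rational_closed.
Qed.
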